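(* Assume (A1) and $b\ne0$. Define the equivalence relation $j\sim k$ on $[K]$ by $x(I_j,b)=x(I_k,b)$, with equivalence classes $\mathcal B_1,\dots,\mathcal B_T$. Then there exists $\epsilon>0$ such that for every $\tilde b\in\mathbb{R}^m$ with $P(\tilde b)\ne\emptyset$ and $\|\tilde b-b\|<\epsilon$, and for every $1\le t\le T$, there exists $k\in\mathcal B_t$ with $x(I_k,\tilde b)\in OPT(\tilde b)$.
   Context: $A\in\mathbb{R}^{m\times d}$ of full rank $m\le d$, $b\in\mathbb{R}^m$, $c\in\mathbb{R}^d$. For $\beta\in\mathbb{R}^m$, $(\mathrm{P}_\beta)$ is $\min c^Tx$ s.t. $Ax=\beta,x\ge0$, $P(\beta)=\{x:Ax=\beta,x\ge0\}$, and $OPT(\beta)$ its optimal set. A basis is $I\subseteq[d]$, $|I|=m$, $A_I$ invertible; $x(I,\beta)$ has coordinates $(A_I)^{-1}\beta$ on $I$ and $0$ elsewhere; $\lambda(I)=(A_I)^{-T}c_I$; $I$ is dual feasible if $A^T\lambda(I)\le c$. $I_1,\dots,I_K$ are exactly the dual feasible bases with $x(I_k,b)\ge0$. (A1): $OPT(b)$ is non-empty and bounded. *)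

From mathcomp Require Import all_boot all_order all_algebra.
From mathcomp Require Import reals.
Set Implicit Arguments. Unset Strict Implicit. Unset Printing Implicit Defensive.
Import Order.TTheory GRing.Theory Num.Theory.
Local Open Scope ring_scope.

Section LP.
Variables (R : realType) (m d : nat) (A : 'M[R]_(m, d)) (c : 'cV[R]_d).

(* j-th column index of the index set I (listed in increasing order);
   None if j >= #|I| (never happens for a basis, where #|I| = m). *)
Definition colidx (I : {set 'I_d}) (j : 'I_m) : option 'I_d :=
  nth None [seq Some k | k <- enum I] j.

Definition AI (I : {set 'I_d}) : 'M[R]_m :=
  \matrix_(i < m, j < m) oapp (A i) 0 (colidx I j).

Definition cI (I : {set 'I_d}) : 'cV[R]_m :=
  \col_(j < m) oapp (fun k => c k 0) 0 (colidx I j).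

Definition is_basis (I : {set 'I_d}) : Prop :=
  #|I| = m /\ AI I \in unitmx.

(* x(I, beta): coordinates (A_I)^{-1} beta on I, 0 elsewhere *)
Definition xb (I : {set 'I_d}) (beta : 'cV[R]_m) : 'cV[R]_d :=
  \col_(k < d) \sum_(j < m | colidx I j == Some k) (invmx (AI I) *m beta) j 0.

Definition lam (I : {set 'I_d}) : 'cV[R]_m := (invmx (AI I))^T *m cI I.

Definition dual_feasible (I : {set 'I_d}) : Prop :=
  forall k : 'I_d, (A^T *m lam I) k 0 <= c k 0.

Definition feas (beta : 'cV[R]_m) (x : 'cV[R]_d) : Prop :=
  A *m x = beta /\ forall k : 'I_d, 0 <= x k 0.

Definition cost (x : 'cV[R]_d) : R := \sum_(k < d) c k 0 * x k 0.

Definition opt (beta : 'cV[R]_m) (x : 'cV[R]_d) : Prop :=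
  feas beta x /\ forall y, feas beta y -> cost x <= cost y.

(* the bases I_1, ..., I_K: dual feasible bases with x(I, b) >= 0 *)
Definition good_basis (b : 'cV[R]_m) (I : {set 'I_d}) : Prop :=
  is_basis I /\ dual_feasible I /\ forall k : 'I_d, 0 <= xb I b k 0.

End LP.

Definition enorm (R : realType) (m : nat) (v : 'cV[R]_m) : R :=
  Num.sqrt (\sum_(i < m) v i 0 ^+ 2).

From mathcomp Require Import all_boot all_order all_algebra.
From mathcomp Require Import reals.
From mathcomp Require Import zify ring lra.
From Stdlib Require Import Classical.
Set Implicit Arguments. Unset Strict Implicit. Unset Printing Implicit Defensive.
Import Order.TTheory GRing.Theory Num.Theory.
Local Open Scope ring_scope.

(* Let I be a dual feasible basis with x(I,b) >= 0.  We show that for every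
   feasible bt close enough to b some dual feasible basis J with
   x(J,b) = x(I,b) is primal feasible for bt; by weak duality x(J,bt) is then
   optimal for (P_bt).  The argument is the dual simplex method with the
   lexicographic rule, started at I and restricted to bases J with
   x(J,b) = x(I,b).  The cost c is perturbed into the matrix
   Ct = [c | e_k for k not in I | identity]; J is lexicographically dual
   feasible when every row of its reduced-cost matrix is lexicographically
   nonnegative.  This implies dual feasibility and holds for J = I.  Among the
   lexicographically dual feasible J with x(J,b) = x(I,b), take one whose
   lexicographic dual objective is maximal.  If x(J,bt)_r < 0, then
   x(J,b)_r = 0, because positive coordinates of the finitely many linear maps
   x(J,.) stay positive near b; the dual simplex pivot on row r, with entering
   index given by the lexicographic ratio test, keeps x(.,b) and
   lexicographic dual feasibility and strictly increases the objective, which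
   contradicts maximality. *)

Section Entries.
Variables (R : pzRingType) (p q : nat).
Implicit Types M N : 'M[R]_(p, q).

Lemma mxE_subZ M N a i j : (M - a *: N) i j = M i j - a * N i j.
Proof. by rewrite !mxE. Qed.

Lemma mxE_addZ M N a i j : (M + a *: N) i j = M i j + a * N i j.
Proof. by rewrite !mxE. Qed.

Lemma mxE_row (M : 'M[R]_(p, q)) k i : row k M 0 i = M k i.
Proof. by rewrite mxE. Qed.

End Entries.

Section Bases.
Variables (R : realType) (m d : nat) (A : 'M[R]_(m, d)).
Implicit Types (J : {set 'I_d}) (k : 'I_d).

Lemma colidx_mem J (j : 'I_m) k : colidx J j = Some k -> k \in J.
Proof.
rewrite /colidx; case: (ltnP j (size (enum J))) => j_lt.
  case E: (enum J) j_lt => [|x0 s] // j_lt.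
  by rewrite (nth_map x0) //= => -[<-]; rewrite -mem_enum E mem_nth.
by rewrite nth_default ?size_map.
Qed.

Lemma colidx_total J (j : 'I_m) : #|J| = m -> exists k, colidx J j = Some k.
Proof.
move=> cardJ; have : (j < size (enum J))%N by rewrite -cardE cardJ.
rewrite /colidx; case E: (enum J) => [|x0 s] // j_lt.
by exists (nth x0 (x0 :: s) j); rewrite (nth_map x0).
Qed.

Lemma colidx_inj J (j1 j2 : 'I_m) k :
  colidx J j1 = Some k -> colidx J j2 = Some k -> j1 = j2.
Proof.
rewrite /colidx.
case: (ltnP j1 (size (enum J))) => lt1; last by rewrite nth_default ?size_map.
case: (ltnP j2 (size (enum J))) => lt2; last by move=> _; rewrite nth_default ?size_map.
rewrite !(nth_map k) // => -[e1] -[e2]; apply: val_inj => /=.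
by apply/eqP; rewrite -(nth_uniq k lt1 lt2 (enum_uniq _)) e1 e2.
Qed.

Lemma colidx_onto J k : #|J| = m -> k \in J -> exists j : 'I_m, colidx J j = Some k.
Proof.
move=> cardJ kJ.
have idx_lt : (index k (enum J) < m)%N by rewrite -cardJ cardE index_mem mem_enum.
exists (Ordinal idx_lt); rewrite /colidx (nth_map k) /=; last by rewrite index_mem mem_enum.
by rewrite nth_index // mem_enum.
Qed.

Lemma sum_colidx_in J k (F : 'I_m -> R) j0 :
  colidx J j0 = Some k -> \sum_(j | colidx J j == Some k) F j = F j0.
Proof.
move=> j0k; rewrite (big_pred1 j0) // => j /=.
by apply/eqP/eqP => [jk|->] //; exact: colidx_inj jk j0k.
Qed.

Lemma sum_colidx_out J k (F : 'I_m -> R) :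
  k \notin J -> \sum_(j | colidx J j == Some k) F j = 0.
Proof.
move=> kJ; rewrite big_pred0 // => j /=; apply/negbTE/eqP => jk.
by move: kJ; rewrite (colidx_mem jk).
Qed.

Lemma exchange_colidx J (F : 'I_m -> 'I_d -> R) :
  \sum_k \sum_(j | colidx J j == Some k) F j k = \sum_j oapp (F j) 0 (colidx J j).
Proof.
under eq_bigr do rewrite big_mkcond.
rewrite exchange_big; apply: eq_bigr => j _; rewrite -big_mkcond.
case: (colidx J j) => [k0|] /=; last by rewrite big_pred0.
by rewrite (big_pred1 k0) // => k /=; rewrite eq_sym.
Qed.

Definition embed J (y : 'cV[R]_m) : 'cV[R]_d :=
  \col_k \sum_(j | colidx J j == Some k) y j 0.

Lemma A_embed J (y : 'cV[R]_m) : A *m embed J y = AI A J *m y.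
Proof.
apply/matrixP => i z; rewrite ord1 !mxE.
under eq_bigr do rewrite mxE big_distrr.
rewrite exchange_colidx; apply: eq_bigr => j _; rewrite mxE.
by case: (colidx J j) => [k|] /=; rewrite ?mul0r.
Qed.

Lemma embed_in J (y : 'cV[R]_m) (j : 'I_m) k :
  colidx J j = Some k -> embed J y k 0 = y j 0.
Proof. by move=> jk; rewrite mxE (sum_colidx_in _ jk). Qed.

Lemma embed_out J (y : 'cV[R]_m) k : k \notin J -> embed J y k 0 = 0.
Proof. by move=> kJ; rewrite mxE sum_colidx_out. Qed.

Lemma embed_onto J (x : 'cV[R]_d) : #|J| = m ->
  (forall k, k \notin J -> x k 0 = 0) -> exists y, embed J y = x.
Proof.
move=> cardJ x_supp; exists (\col_j oapp (fun k => x k 0) 0 (colidx J j)).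
apply/matrixP => k z; rewrite ord1.
have [kJ|kJ] := boolP (k \in J); last by rewrite embed_out // x_supp.
have [j jk] := colidx_onto cardJ kJ.
by rewrite (embed_in _ jk) mxE jk.
Qed.

Lemma basis_of_support J : #|J| = m ->
  (forall x : 'cV[R]_d, (forall k, k \notin J -> x k 0 = 0) -> A *m x = 0 -> x = 0) ->
  is_basis A J.
Proof.
move=> cardJ A_inj; split => //.
rewrite unitmxE unitfE -det_tr; apply/negP => /det0P [v v_neq0 v_ker].
have AIv : AI A J *m v^T = 0 by rewrite -[AI A J]trmxK -trmx_mul v_ker trmx0.
have embed0 : embed J v^T = 0 by apply: A_inj => [k|]; [exact: embed_out|rewrite A_embed].
apply: (negP v_neq0); apply/eqP/rowP => j; rewrite mxE.
have [k jk] := colidx_total j cardJ.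
by have := embed_in v^T jk; rewrite embed0 !mxE => <-.
Qed.

Lemma xb_embed J beta : xb A J beta = embed J (invmx (AI A J) *m beta).
Proof. by []. Qed.

Lemma xb_A J beta : is_basis A J -> A *m xb A J beta = beta.
Proof. by move=> [_ J_unit]; rewrite xb_embed A_embed mulmxA mulmxV ?mul1mx. Qed.

Lemma xb_out J beta k : k \notin J -> xb A J beta k 0 = 0.
Proof. by rewrite xb_embed; exact: embed_out. Qed.

Lemma xb_uniq J beta (x : 'cV[R]_d) : is_basis A J ->
  (forall k, k \notin J -> x k 0 = 0) -> A *m x = beta -> xb A J beta = x.
Proof.
move=> [cardJ J_unit] x_supp; have [y <-] := embed_onto cardJ x_supp.
by move=> <-; rewrite A_embed xb_embed mulKmx.
Qed.

Definition xbmx J : 'M[R]_(d, m) :=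
  \matrix_(k, i) \sum_(j | colidx J j == Some k) invmx (AI A J) j i.

Lemma xb_mulmx J beta : xb A J beta = xbmx J *m beta.
Proof.
apply/matrixP => k z; rewrite ord1 !mxE.
under [RHS]eq_bigr do rewrite mxE big_distrl.
by rewrite exchange_big; apply: eq_bigr => j _; rewrite mxE.
Qed.

Lemma xb_col J k : is_basis A J -> k \in J -> xb A J (col k A) = delta_mx k 0.
Proof.
move=> J_basis kJ; apply: xb_uniq => //; last by rewrite colE.
by move=> l lJ; rewrite mxE andbT; case: eqP lJ => // ->; rewrite kJ.
Qed.

(* The simplex tableau: alpha J r k is the r-th coordinate of x(J, A_k). *)
Definition alpha J r k : R := (xbmx J *m A) r k.

Lemma alpha_xb J r k : alpha J r k = xb A J (col k A) r 0.
Proof. by rewrite xb_mulmx /alpha !mxE; apply: eq_bigr => i _; rewrite !mxE. Qed.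

Lemma alpha_in J r k : is_basis A J -> k \in J -> alpha J r k = (r == k)%:R.
Proof. by move=> J_basis kJ; rewrite alpha_xb xb_col // mxE andbT. Qed.

(* If x(J, A y)_r < 0 for some y >= 0, the row r of the tableau has a
   negative entry: this is where feasibility of the new right-hand side enters. *)
Lemma tableau_negative_entry J r (y : 'cV[R]_d) :
  (forall k, 0 <= y k 0) -> xb A J (A *m y) r 0 < 0 -> exists k, alpha J r k < 0.
Proof.
move=> y_ge0; rewrite xb_mulmx mulmxA mxE.
have [/existsP [k neg] _|/existsPn none] := boolP [exists k, alpha J r k < 0].
  by exists k.
rewrite ltNge sumr_ge0 // => k _; apply: mulr_ge0 (y_ge0 k).
by rewrite leNgt; exact: none.
Qed.

Lemma trmx_mul_colidx J (j : 'I_m) k (lm : 'cV[R]_m) : colidx J j = Some k ->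
  (A^T *m lm) k 0 = ((AI A J)^T *m lm) j 0.
Proof. by move=> jk; rewrite !mxE; apply: eq_bigr => i _; rewrite !mxE jk. Qed.

Lemma lam_in J (c' : 'cV[R]_d) k : is_basis A J -> k \in J ->
  (A^T *m lam A c' J) k 0 = c' k 0.
Proof.
move=> [cardJ J_unit] kJ; have [j jk] := colidx_onto cardJ kJ.
by rewrite (trmx_mul_colidx _ jk) /lam mulmxA -trmx_mul mulVmx // trmx1 mul1mx mxE jk.
Qed.

Lemma lam_uniq J (c' : 'cV[R]_d) (lm : 'cV[R]_m) : is_basis A J ->
  (forall k, k \in J -> (A^T *m lm) k 0 = c' k 0) -> lam A c' J = lm.
Proof.
move=> [cardJ J_unit] lm_eq.
have AIlm : (AI A J)^T *m lm = cI m c' J.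
  apply/matrixP => j z; rewrite ord1; have [k jk] := colidx_total j cardJ.
  by rewrite -(trmx_mul_colidx _ jk) lm_eq ?(colidx_mem jk) // mxE jk.
by rewrite /lam -AIlm mulmxA -trmx_mul mulmxV // trmx1 mul1mx.
Qed.

Lemma lam0 J (c' : 'cV[R]_d) : (forall k, k \in J -> c' k 0 = 0) -> lam A c' J = 0.
Proof.
move=> c'_J; suff cI0 : cI m c' J = 0 by rewrite /lam cI0 mulmx0.
apply/matrixP => j z; rewrite !mxE.
by case E: (colidx J j) => [k|] //=; exact: c'_J (colidx_mem E).
Qed.

End Bases.

Section Lexicographic.
Variables (R : realDomainType) (n : nat).
Implicit Types u v w : 'rV[R]_n.

Definition lexpos v := exists i : 'I_n, 0 < v 0 i /\ forall j : 'I_n, (j < i)%N -> v 0 j = 0.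
Definition lexnn v := v = 0 \/ lexpos v.
Definition lexlt u v := lexpos (v - u).

Lemma lexposD u v : lexpos u -> lexpos v -> lexpos (u + v).
Proof.
move=> [i [ui u_lt]] [j [vj v_lt]].
have [ij|ji|/val_inj eq_ij] := ltngtP i j.
- exists i; rewrite !mxE v_lt // addr0; split => // k ki.
  by rewrite !mxE u_lt ?v_lt ?addr0 // (ltn_trans ki).
- exists j; rewrite !mxE u_lt // add0r; split => // k kj.
  by rewrite !mxE u_lt ?v_lt ?addr0 // (ltn_trans kj).
- subst j; exists i; rewrite !mxE addr_gt0 //; split => // k ki.
  by rewrite !mxE u_lt ?v_lt ?addr0.
Qed.

Lemma lexnnD u v : lexnn u -> lexnn v -> lexnn (u + v).
Proof.
move=> [->|u_pos] [->|v_pos]; rewrite ?add0r ?addr0; try by [left|right].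
by right; apply: lexposD.
Qed.

Lemma lexposZ a v : 0 < a -> lexpos v -> lexpos (a *: v).
Proof.
move=> a_gt0 [i [vi v_lt]]; exists i; rewrite !mxE mulr_gt0 //; split => // j ji.
by rewrite !mxE v_lt ?mulr0.
Qed.

Lemma lexnnZ a v : 0 <= a -> lexnn v -> lexnn (a *: v).
Proof.
rewrite le_eqVlt => /orP [/eqP <-|a_gt0] [->|v_pos];
  rewrite ?scale0r ?scaler0; try by left.
by right; apply: lexposZ.
Qed.

Lemma lexpos_neq0 v : lexpos v -> v <> 0.
Proof. by move=> [i [vi _]] v0; move: vi; rewrite v0 mxE ltxx. Qed.

Lemma lex_trichotomy v : v = 0 \/ lexpos v \/ lexpos (- v).
Proof.
have [/existsP [i0 vi0]|/existsPn v0] := boolP [exists i, v 0 i != 0]; last first.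
  by left; apply/rowP => i; apply/eqP; rewrite mxE -[_ == _]negbK v0.
case: (@arg_minnP _ i0 (fun i => v 0 i != 0) val vi0) => i vi i_min.
have v_lt (j : 'I_n) : (j < i)%N -> v 0 j = 0.
  by move=> ji; apply/eqP; apply: contraTT ji => /i_min; rewrite -leqNgt.
right; have [neg|pos|/eqP] := ltgtP (v 0 i) 0; last by rewrite (negbTE vi).
- by right; exists i; rewrite mxE oppr_gt0; split => // j ji; rewrite mxE v_lt ?oppr0.
- by left; exists i.
Qed.

Lemma lexlt_trans u v w : lexlt u v -> lexlt v w -> lexlt u w.
Proof. by rewrite /lexlt => uv vw; have := lexposD vw uv; rewrite addrA subrK. Qed.

Lemma lexlt_irr u : ~ lexlt u u.
Proof. by rewrite /lexlt subrr => /lexpos_neq0. Qed.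

Lemma lexnn_notlt u v : ~ lexlt v u -> lexnn (v - u).
Proof.
move=> not_vu; have [/eqP|[pos|neg]] := lex_trichotomy (v - u).
- by rewrite subr_eq0 => /eqP ->; left; rewrite subrr.
- by right.
- by case: not_vu; rewrite /lexlt opprB in neg.
Qed.

End Lexicographic.

Lemma exists_maximal (T : finType) (lt : T -> T -> Prop) (P : T -> Prop) :
  (forall x, ~ lt x x) -> (forall x y z, lt x y -> lt y z -> lt x z) ->
  (exists x, P x) -> exists x, P x /\ forall y, P y -> ~ lt x y.
Proof.
move=> irr trans [x0 Px0].
suff /(_ (enum T)) : forall s : seq T, (exists2 x, x \in s & P x) ->
    exists x, P x /\ forall y, y \in s -> P y -> ~ lt x y.
  case; first by exists x0; rewrite ?mem_enum.
  by move=> x [Px x_max]; exists x; split => // y; apply: x_max; rewrite mem_enum.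
elim => [|a s IH]; first by case.
move=> [x1 x1_in Px1].
have [/IH [x [Px x_max]]|none] := classic (exists2 x, x \in s & P x); last first.
  have Pa : P a.
    by move: x1_in; rewrite inE => /predU1P [<- //|x1s]; case: none; exists x1.
  exists a; split => // y; rewrite inE => /predU1P [-> _|ys Py]; first exact: irr.
  by case: none; exists y.
have [[Pa xa]|not_above] := classic (P a /\ lt x a).
  exists a; split => // y; rewrite inE => /predU1P [->|ys] Py; first exact: irr.
  by move=> ay; apply: (x_max y ys Py); apply: trans xa ay.
exists x; split => // y; rewrite inE => /predU1P [->|ys] Py; last exact: x_max.
by move=> xa; apply: not_above.
Qed.

Section Perturbation.
Variables (R : realType) (m d : nat) (A : 'M[R]_(m, d)) (c : 'cV[R]_d)
  (I : {set 'I_d}) (bt : 'cV[R]_m).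

Local Notation n := (d + d).+1.
Implicit Types (J : {set 'I_d}) (k : 'I_d).

Definition Ct : 'M[R]_(d, n) := \matrix_(k, i)
  if val i == 0%N then c k 0 else if (val i == k.+1) && (k \notin I) then 1
  else if val i == (k.+1 + d)%N then 1 else 0.

Definition Lam J (i : 'I_n) : 'cV[R]_m := lam A (col i Ct) J.

Definition Sred J : 'M[R]_(d, n) := \matrix_(k, i) (Ct k i - (A^T *m Lam J i) k 0).

Definition Obj J : 'rV[R]_n := \row_i (bt^T *m Lam J i) 0 0.

Definition lexdf J := forall k, lexnn (row k (Sred J)).

Lemma SredE J k i : Sred J k i = Ct k i - (A^T *m Lam J i) k 0.
Proof. by rewrite mxE. Qed.

Lemma ObjE J i : Obj J 0 i = (bt^T *m Lam J i) 0 0.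
Proof. by rewrite mxE. Qed.

Lemma col0_Ct : col ord0 Ct = c.
Proof. by apply/matrixP => k z; rewrite ord1 !mxE. Qed.

Lemma Sred_cost J k : Sred J k ord0 = c k 0 - (A^T *m lam A c J) k 0.
Proof. by rewrite SredE /Lam col0_Ct; congr (_ - _); rewrite mxE. Qed.

(* The leading entry of a lexicographically nonnegative row is nonnegative. *)
Lemma lexdf_dual_feasible J : lexdf J -> dual_feasible A c J.
Proof.
move=> J_lexdf k; rewrite -subr_ge0 -Sred_cost.
have [/(congr1 (fun v : 'rV_n => v 0 ord0))|[i [pos lt_i]]] := J_lexdf k.
  by rewrite !mxE => ->.
have [i0|i_gt0] := posnP i; last by rewrite -(lt_i ord0 i_gt0) mxE.
have -> : ord0 = i by apply: val_inj; rewrite /= i0.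
by move: pos; rewrite mxE => /ltW.
Qed.

Lemma Sred_in J k i : is_basis A J -> k \in J -> Sred J k i = 0.
Proof. by move=> J_basis kJ; rewrite SredE /Lam lam_in // [X in _ - X]mxE subrr. Qed.

Lemma Sred_free J i : (forall j, j \in J -> Ct j i = 0) -> forall k, Sred J k i = Ct k i.
Proof.
move=> Ct_J k; have Lam0 : Lam J i = 0 by apply: lam0 => j jJ; rewrite mxE Ct_J.
by rewrite SredE Lam0 mulmx0 [X in _ - X]mxE subr0.
Qed.

Lemma Ct_low k (i : 'I_n) : (0 < i <= d)%N ->
  Ct k i = ((val i == k.+1) && (k \notin I))%:R.
Proof.
move=> /andP [i_gt0 i_le]; rewrite mxE.
have -> : (val i == 0%N) = false by apply/negbTE; rewrite -lt0n.
have -> : (val i == (k.+1 + d)%N) = false.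
  by apply/negbTE/eqP => e; move: i_le; rewrite e; lia.
by case: (_ && _).
Qed.

Lemma iK_proof k : (k.+1 + d < n)%N.
Proof. by rewrite addSn ltnS ltn_add2r. Qed.

Definition iK k : 'I_n := Ordinal (iK_proof k).

Lemma Ct_iK j k : Ct j (iK k) = (j == k)%:R.
Proof.
rewrite mxE /= addSn /=.
have -> : ((k + d).+1 == j.+1)%N = false.
  by apply/negbTE/eqP => -[e]; have := ltn_ord j; lia.
rewrite /= addSn eqSS eqn_add2r.
have [->|jk] := eqVneq j k; first by rewrite !eqxx.
by case: eqP => // /val_inj kj; rewrite kj eqxx in jk.
Qed.

(* A nonbasic index k has reduced cost 1 in its identity column; this makes
   the ratios of the ratio test nonzero. *)
Lemma Sred_out J k : k \notin J -> Sred J k (iK k) = 1.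
Proof.
move=> kJ; rewrite Sred_free ?Ct_iK ?eqxx // => j jJ.
by rewrite Ct_iK; case: eqP jJ kJ => // -> ->.
Qed.

Lemma lexdf_start : is_basis A I -> dual_feasible A c I -> lexdf I.
Proof.
move=> I_basis I_df k; have [kI|kI] := boolP (k \in I).
  by left; apply/rowP => i; rewrite [LHS]mxE Sred_in // mxE.
right; have Sred_low (i : 'I_n) : (0 < i <= d)%N -> Sred I k i = Ct k i.
  by move=> i_low; apply: Sred_free => j jI; rewrite Ct_low // jI andbF.
have [pos|] := ltP 0 (Sred I k ord0); first by exists ord0; rewrite mxE.
have := I_df k; rewrite -subr_ge0 -Sred_cost => ge0 le0.
have k1_lt : (k.+1 < n)%N by have := ltn_ord k; lia.
exists (Ordinal k1_lt); rewrite mxE Sred_low /=; last by have := ltn_ord k; lia.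
rewrite Ct_low /= ?eqxx ?kI ?ltr01; last by have := ltn_ord k; lia.
split => // j j_lt; rewrite mxE; have [j0|j_gt0] := posnP j.
  have -> : j = ord0 by apply: val_inj.
  by apply/eqP; rewrite eq_le le0 ge0.
have j_low : (0 < j <= d)%N by have := ltn_ord k; lia.
by rewrite Sred_low // Ct_low // (ltn_eqF j_lt).
Qed.

Definition ratio J r k : 'rV[R]_n := (- alpha A J r k)^-1 *: row k (Sred J).

Lemma ratioE J r k i : ratio J r k 0 i = Sred J k i / - alpha A J r k.
Proof. by rewrite !mxE mulrC. Qed.

Section Pivot.
Variables (J : {set 'I_d}) (r ke : 'I_d).
Hypotheses (J_basis : is_basis A J) (rJ : r \in J) (keJ : ke \notin J)
  (alpha_neq0 : alpha A J r ke != 0).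

Local Notation J' := (ke |: (J :\ r)).
Local Notation rho := ((row r (xbmx A J))^T).

(* rho, the r-th row of the map x(J,.), is the direction of the dual update. *)
Lemma AT_rho k : (A^T *m rho) k 0 = alpha A J r k.
Proof. by rewrite /alpha !mxE; apply: eq_bigr => i _; rewrite !mxE mulrC. Qed.

Lemma bt_rho : (bt^T *m rho) 0 0 = xb A J bt r 0.
Proof. by rewrite xb_mulmx !mxE; apply: eq_bigr => i _; rewrite !mxE mulrC. Qed.

(* Exchanging r for ke yields a basis: from a kernel vector x supported on J'
   subtract x_ke (e_ke - x(J, A_ke)); the result is a kernel vector supported
   on J, hence zero, and its r-th coordinate x_ke * alpha forces x_ke = 0. *)
Lemma pivot_basis : is_basis A J'.
Proof.
have cardJ' : #|J'| = m.
  rewrite cardsU1 in_setD1 (negbTE keJ) andbF /=.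
  by case: J_basis => cardJ _; rewrite -cardJ (cardsD1 r J) rJ.
apply: basis_of_support => // x x_supp Ax.
have r_neq_ke : r != ke by apply: contraNneq keJ => <-.
have x_r : x r 0 = 0 by apply: x_supp; rewrite !inE eqxx andFb orbF.
set w := xb A J (col ke A).
have Aw : A *m w = col ke A by rewrite xb_A.
have w_supp k : k \notin J -> w k 0 = 0 by move=> kJ; rewrite xb_out.
have w_r : w r 0 = alpha A J r ke by rewrite alpha_xb.
clearbody w; pose z := x - x ke 0 *: delta_mx ke 0 + x ke 0 *: w.
have Az : A *m z = 0.
  by rewrite !mulmxDr mulmxN -!scalemxAr -colE Aw Ax sub0r addNr.
have z_supp k : k \notin J -> z k 0 = 0.
  move=> kJ; rewrite !mxE andbT w_supp // mulr0 addr0.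
  have [->|k_neq] := eqVneq k ke; first by rewrite mulr1 subrr.
  by rewrite mulr0 subr0 x_supp // !inE negb_or k_neq negb_and kJ orbT.
have z0 : z = 0 by rewrite -(xb_uniq J_basis z_supp Az) xb_mulmx mulmx0.
have x_ke : x ke 0 = 0.
  have := congr1 (fun v : 'cV_d => v r 0) z0.
  rewrite !mxE andbT x_r (negbTE r_neq_ke) mulr0 subr0 add0r w_r.
  by move/eqP; rewrite mulf_eq0 (negbTE alpha_neq0) orbF => /eqP.
by move: z0; rewrite /z x_ke !scale0r subr0 addr0.
Qed.

Lemma pivot_Lam i : Lam J' i = Lam J i - ratio J r ke 0 i *: rho.
Proof.
apply: lam_uniq pivot_basis _ => k; rewrite mulmxBr -scalemxAr mxE_subZ AT_rho.
rewrite !inE => /orP [/eqP ->|/andP [k_neq kJ]].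
  by rewrite ratioE SredE [RHS]mxE; field.
by rewrite alpha_in // eq_sym (negbTE k_neq) mulr0 subr0 /Lam lam_in.
Qed.

Lemma pivot_Sred k : row k (Sred J') = row k (Sred J) + alpha A J r k *: ratio J r ke.
Proof.
apply/rowP => i; rewrite mxE_addZ !mxE_row !SredE pivot_Lam.
by rewrite mulmxBr -scalemxAr mxE_subZ AT_rho; ring.
Qed.

Lemma pivot_Obj : Obj J' = Obj J - xb A J bt r 0 *: ratio J r ke.
Proof.
apply/rowP => i; rewrite mxE_subZ !ObjE pivot_Lam.
by rewrite mulmxBr -scalemxAr mxE_subZ bt_rho mulrC.
Qed.

Lemma pivot_xb beta : xb A J beta r 0 = 0 -> xb A J' beta = xb A J beta.
Proof.
move=> xr0; apply: xb_uniq pivot_basis _ (xb_A _ J_basis) => k.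
rewrite !inE negb_or negb_and negbK => /andP [_ /orP [/eqP ->|kJ]] //.
exact: xb_out.
Qed.

End Pivot.

Lemma ratio_test J r : is_basis A J -> lexdf J -> r \in J ->
  (exists k, alpha A J r k < 0) ->
  exists ke, [/\ ke \notin J, alpha A J r ke < 0, lexdf (ke |: (J :\ r))
                 & lexpos (ratio J r ke)].
Proof.
move=> J_basis J_lexdf rJ neg_entry.
have [ke [alpha_ke ke_min]] := @exists_maximal _
  (fun k k' => lexlt (ratio J r k') (ratio J r k)) (fun k => alpha A J r k < 0)
  (fun k => @lexlt_irr _ _ (ratio J r k)) (fun k1 k2 k3 h12 h23 => lexlt_trans h23 h12)
  neg_entry.
have keJ : ke \notin J.
  by apply: contraTN alpha_ke => keJ; rewrite alpha_in // -leNgt ler0n.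
have alpha_neq0 : alpha A J r ke != 0 by rewrite lt_eqF.
have ratio_nn (k : 'I_d) : alpha A J r k < 0 -> lexnn (ratio J r k).
  by move=> neg; apply: lexnnZ (J_lexdf k); rewrite invr_ge0 oppr_ge0 ltW.
exists ke; split => //.
  move=> k; rewrite (pivot_Sred J_basis rJ keJ alpha_neq0).
  have [neg|nonneg] := ltP (alpha A J r k) 0; last first.
    by apply: lexnnD (J_lexdf k) (lexnnZ nonneg (ratio_nn _ alpha_ke)).
  have -> : row k (Sred J) = (- alpha A J r k) *: ratio J r k.
    by rewrite scalerA mulrV ?scale1r // unitfE oppr_eq0 lt_eqF.
  rewrite (_ : _ + _ = (- alpha A J r k) *: (ratio J r k - ratio J r ke)); last first.
    by rewrite scalerBr !scaleNr opprK.
  by apply: lexnnZ (lexnn_notlt (ke_min k neg)); rewrite oppr_ge0 ltW.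
have [|//] := ratio_nn _ alpha_ke => /(congr1 (fun v : 'rV_n => v 0 (iK ke))).
rewrite ratioE Sred_out // mxE mul1r => /eqP.
by rewrite invr_eq0 oppr_eq0 (negbTE alpha_neq0).
Qed.

Lemma dual_pivot_improves J r : (exists y, feas A bt y) -> is_basis A J -> lexdf J ->
  xb A J bt r 0 < 0 ->
  exists J', [/\ is_basis A J', lexdf J', lexlt (Obj J) (Obj J')
               & forall beta, xb A J beta r 0 = 0 -> xb A J' beta = xb A J beta].
Proof.
move=> [y [Ay y_ge0]] J_basis J_lexdf neg.
have rJ : r \in J by apply: contraLR neg => /xb_out ->; rewrite ltxx.
have entry : exists k, alpha A J r k < 0.
  by apply: tableau_negative_entry y_ge0 _; rewrite Ay.
have [ke [keJ alpha_ke J'_lexdf ratio_pos]] := ratio_test J_basis J_lexdf rJ entry.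
have alpha_neq0 : alpha A J r ke != 0 by rewrite lt_eqF.
exists (ke |: (J :\ r)); split => //.
- exact: pivot_basis.
- rewrite /lexlt (pivot_Obj J_basis rJ keJ alpha_neq0) addrAC subrr add0r -scaleNr.
  by apply: lexposZ ratio_pos; rewrite oppr_gt0.
- exact: pivot_xb.
Qed.

End Perturbation.

Section Duality.
Variables (R : realType) (m d : nat) (A : 'M[R]_(m, d)) (c : 'cV[R]_d).

Lemma cost_dual (lm : 'cV[R]_m) (x : 'cV[R]_d) :
  \sum_k (A^T *m lm) k 0 * x k 0 = (lm^T *m (A *m x)) 0 0.
Proof.
have -> : lm^T *m (A *m x) = (A^T *m lm)^T *m x by rewrite trmx_mul trmxK mulmxA.
by rewrite mxE; apply: eq_bigr => k _; rewrite !mxE.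
Qed.

Lemma weak_duality J beta z : is_basis A J -> dual_feasible A c J ->
  feas A beta z -> cost c (xb A J beta) <= cost c z.
Proof.
move=> J_basis J_df [Az z_ge0].
have -> : cost c (xb A J beta) = ((lam A c J)^T *m beta) 0 0.
  rewrite /cost -[in RHS](xb_A beta J_basis) -cost_dual; apply: eq_bigr => k _.
  by have [kJ|kJ] := boolP (k \in J); [rewrite lam_in|rewrite xb_out // !mulr0].
rewrite -Az -cost_dual /cost; apply: ler_sum => k _.
by rewrite ler_wpM2r //; apply: J_df.
Qed.

(* Each coordinate is bounded by the Euclidean norm, so each coordinate map
   x(J,.)_r is Lipschitz. *)
Lemma norm_le_enorm (u : 'cV[R]_m) i : `|u i 0| <= enorm u.
Proof.
rewrite /enorm -sqrtr_sqr ler_wsqrtr // (bigD1 i) //= lerDl.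
by apply: sumr_ge0 => j _; rewrite sqr_ge0.
Qed.

Lemma xb_entry_bound J r (u : 'cV[R]_m) :
  `|xb A J u r 0| <= (\sum_i `|xbmx A J r i|) * enorm u.
Proof.
rewrite xb_mulmx mxE mulr_suml; apply: le_trans (ler_norm_sum _ _ _) _.
by apply: ler_sum => i _; rewrite normrM ler_wpM2l // norm_le_enorm.
Qed.

(* Positive coordinates of the finitely many basic solutions x(J,b) remain
   positive for every right-hand side near b; eps is the least ratio
   x(J,b)_r / (1 + S(J,r)) over all positive coordinates, S(J,r) being the
   Lipschitz constant of x(J,.)_r. *)
Lemma positive_entries_stable (b : 'cV[R]_m) :
  exists eps : R, 0 < eps /\ forall bt J r, enorm (bt - b) < eps ->
    0 < xb A J b r 0 -> 0 < xb A J bt r 0.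
Proof.
pose S (p : {set 'I_d} * 'I_d) := \sum_i `|xbmx A p.1 p.2 i|.
have S_ge0 p : 0 <= S p by apply: sumr_ge0.
pose eps := \big[Num.min/1]_(p | 0 < xb A p.1 b p.2 0) (xb A p.1 b p.2 0 / (1 + S p)).
have eps_gt0 : 0 < eps.
  apply: (big_ind (fun x => 0 < x)) => // [x y x0 y0|p pos]; first by rewrite lt_min x0.
  by apply: divr_gt0 => //; have := S_ge0 p; lra.
exists eps; split => // bt J r close pos.
have eps_le : eps <= xb A J b r 0 / (1 + S (J, r)).
  exact: (@bigmin_le_cond _ R _ 1 (J, r) _ _ pos).
rewrite ler_pdivlMr in eps_le; last by have := S_ge0 (J, r); lra.
have -> : xb A J bt = xb A J b + xb A J (bt - b).
  by rewrite !xb_mulmx mulmxBr addrC subrK.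
rewrite mxE; have dev : `|xb A J (bt - b) r 0| <= S (J, r) * eps.
  apply: le_trans (xb_entry_bound J r (bt - b)) _.
  by apply: ler_wpM2l; [apply: sumr_ge0|exact: ltW].
have := ler_norm (- xb A J (bt - b) r 0); rewrite normrN.
move: dev eps_le eps_gt0 (S_ge0 (J, r)).
move: (S (J, r)) (xb A J b r 0) (xb A J (bt - b) r 0) => s x e.
nra.
Qed.

End Duality.

Theorem lemma4p2 (R : realType) (m d : nat) (A : 'M[R]_(m, d))
    (b : 'cV[R]_m) (c : 'cV[R]_d)
    (hmd : (m <= d)%N) (hrank : \rank A = m)
    (A1_nonempty : exists x, opt A c b x)
    (A1_bounded : exists M : R, forall x, opt A c b x -> forall k, `|x k 0| <= M)
    (hb : b != 0) :
  exists eps : R, 0 < eps /\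
    forall bt : 'cV[R]_m, (exists x, feas A bt x) -> enorm (bt - b) < eps ->
    forall I : {set 'I_d}, good_basis A c b I ->
    exists J : {set 'I_d}, good_basis A c b J /\ xb A J b = xb A I b /\
      opt A c bt (xb A J bt).
Proof.
have [eps [eps_gt0 stable]] := positive_entries_stable A b.
exists eps; split => // bt bt_feas close I [I_basis [I_df I_ge0]].
pose P J := [/\ is_basis A J, lexdf A c I J & xb A J b = xb A I b].
have P_I : P I by split => //; exact: lexdf_start.
have [J [[J_basis J_lexdf J_b] J_max]] := @exists_maximal _
  (fun J J' => lexlt (Obj A c I bt J) (Obj A c I bt J')) P
  (fun J => @lexlt_irr _ _ (Obj A c I bt J)) (fun J1 J2 J3 => @lexlt_trans _ _ _ _ _)
  (ex_intro P I P_I).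
(* Maximality forces x(J,bt) >= 0: a negative coordinate is degenerate at b
   and allows an improving pivot that keeps x(.,b). *)
have J_ge0 r : 0 <= xb A J bt r 0.
  rewrite leNgt; apply/negP => neg.
  have degenerate : xb A J b r 0 = 0.
    move: (I_ge0 r); rewrite -J_b le_eqVlt => /orP [/eqP <- //|pos].
    by move: (stable bt J r close pos); rewrite ltNge ltW.
  have [J' [J'_basis J'_lexdf better J'_xb]] :=
    dual_pivot_improves bt_feas J_basis J_lexdf neg.
  by apply: (J_max J') better; split => //; rewrite J'_xb.
have J_df := lexdf_dual_feasible J_lexdf.
exists J; split; first by split; [|split] => // k; rewrite J_b.
split => //; split; first by split; [exact: xb_A|exact: J_ge0].
by move=> z z_feas; exact: weak_duality J_basis J_df z_feas.
Qed.
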